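(* Let $A$ be a nonempty finite set of $n$ alternatives and let $\mathcal{F}$ be a nonempty collection of nonempty subsets of $A$ that is downward closed (if $S\in\mathcal{F}$ and $\emptyset\neq S'\subseteq S$ then $S'\in\mathcal{F}$) and contains every singleton $\{a\}$, $a\in A$. A feasibility-constrained choice rule $C$ is (capacity-constrained) lexicographic if and only if it satisfies $\mathcal{F}$-capacity-filling, monotonicity, and the capacity-wise strong axiom of revealed preference (CSARP).
   Context: Let $\mathcal{A}$ be the set of all nonempty subsets of $A$. A feasibility-constrained choice rule is a map $C$ assigning to each $(S,q)\in\mathcal{A}\times\{1,\dots,n\}$ a nonempty set $C(S,q)\subseteq S$ with $C(S,q)\in\mathcal{F}$ and $|C(S,q)|\le q$. Set $C(S,0)=\emptyset$ by convention. A priority ordering is a complete, transitive and antisymmetric binary relation on $A$; a priority profile is a list $(\succ_1,\dots,\succ_n)$ of priority orderings. $C$ is (capacity-constrained) lexicographic if there exists a priority profile $(\succ_1,\dots,\succ_n)$ such that for each $(S,q)$, $C(S,q)$ is obtained as follows: choose the $\succ_1$-highest alternative of $S$; then, for $k=2,\dots,q$, as long as some remaining alternative exists whose addition to the previously chosen alternatives gives a set in $\mathcal{F}$, choose the $\succ_k$-highest alternative among those remaining alternatives of $S$ that form a set in $\mathcal{F}$ together with the previously chosen ones. $\mathcal{F}$-capacity-filling: for each $(S,q)$ and $a\in S$, if $a\notin C(S,q)$ then either $|C(S,q)|=q$ or $C(S,q)\cup\{a\}\notin\mathcal{F}$. Monotonicity: for each $S\in\mathcal{A}$ and $q\in\{1,\dots,n-1\}$,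 $C(S,q)\subseteq C(S,q+1)$. For $q\in\{1,\dots,n\}$ and $a,b\in A$, write $a\mathrel{R^{\mathcal{F}}_q} b$ if there exists $S\in\mathcal{A}$ with $a,b\in S$, $a,b\notin C(S,q-1)$, $a\in C(S,q)$, $b\notin C(S,q)$, and $C(S,q-1)\cup\{b\}\in\mathcal{F}$. CSARP: for each $q\in\{1,\dots,n\}$ the relation $R^{\mathcal{F}}_q$ is acyclic. *)

From mathcomp Require Import all_boot.
Set Implicit Arguments. Unset Strict Implicit. Unset Printing Implicit Defensive.

Section Defs.
Variable A : finType.

Definition feasibility_collection (F : {set {set A}}) : Prop :=
  [/\ F != set0,
      set0 \notin F,
      (forall S S' : {set A}, S \in F -> S' != set0 -> S' \subset S -> S' \in F)
    & (forall a : A, [set a] \in F)].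

Definition Cz (C : {set A} -> nat -> {set A}) (S : {set A}) (q : nat) : {set A} :=
  if q == 0 then set0 else C S q.

Definition choice_rule (F : {set {set A}}) (C : {set A} -> nat -> {set A}) : Prop :=
  forall S : {set A}, S != set0 -> forall q, 1 <= q <= #|A| ->
    [/\ C S q != set0, C S q \subset S, C S q \in F & #|C S q| <= q].

Definition priority_ordering (r : rel A) : Prop :=
  [/\ (forall a b, r a b || r b a),
      (forall a b c, r a b -> r b c -> r a c)
    & (forall a b, r a b -> r b a -> a = b)].

Definition highest (r : rel A) (T : {set A}) : option A :=
  [pick a in T | [forall b in T, r a b]].

Definition lex_step (F : {set {set A}}) (r : rel A) (S X : {set A}) : {set A} :=
  let T := [set a in S | (a \notin X) && ((a |: X) \in F)] in
  match highest r T with Some a => a |: X | None => X end.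

Definition lex_run (F : {set {set A}}) (p : nat -> rel A) (S : {set A}) (q : nat)
  : {set A} :=
  foldl (fun X k => lex_step F (p k) S X) set0 (iota 1 q).

Definition lexicographic (F : {set {set A}}) (C : {set A} -> nat -> {set A}) : Prop :=
  exists p : nat -> rel A,
    (forall k, 1 <= k <= #|A| -> priority_ordering (p k)) /\
    (forall S : {set A}, S != set0 -> forall q, 1 <= q <= #|A| ->
        C S q = lex_run F p S q).

Definition capacity_filling (F : {set {set A}}) (C : {set A} -> nat -> {set A}) : Prop :=
  forall S : {set A}, S != set0 -> forall q, 1 <= q <= #|A| ->
    forall a, a \in S -> a \notin C S q ->
      #|C S q| = q \/ (C S q :|: [set a]) \notin F.

Definition monotone (C : {set A} -> nat -> {set A}) : Prop :=
  forall S : {set A}, S != set0 -> forall q, 1 <= q <= #|A| - 1 ->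
    C S q \subset C S q.+1.

Definition Rq (F : {set {set A}}) (C : {set A} -> nat -> {set A}) (q : nat) : rel A :=
  fun a b => [exists S : {set A},
    [&& S != set0, a \in S, b \in S,
        a \notin Cz C S q.-1, b \notin Cz C S q.-1,
        a \in C S q, b \notin C S q &
        (Cz C S q.-1 :|: [set b]) \in F]].

Definition acyclic (R : rel A) : Prop :=
  forall a b, R a b -> ~~ connect R b a.

Definition CSARP (F : {set {set A}}) (C : {set A} -> nat -> {set A}) : Prop :=
  forall q, 1 <= q <= #|A| -> acyclic (Rq F C q).

End Defs.

From mathcomp Require Import all_boot.
From mathcomp Require Import zify.
Set Implicit Arguments. Unset Strict Implicit. Unset Printing Implicit Defensive.

(* Both directions compare one step of the choice rule, from C(S,q) to C(S,q+1), with one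
   step of the lexicographic procedure.  If C is lexicographic, the alternative added at
   step q+1 is the >_(q+1)-highest feasible one, so R_(q+1) is contained in the strict part
   of >_(q+1) and is acyclic.  Conversely, capacity-filling and monotonicity force C(S,q+1)
   to be C(S,q) plus at most one feasible alternative c, and c is R_(q+1)-related to every
   other feasible candidate; any linear extension of the acyclic relation R_(q+1) is then a
   priority >_(q+1) that picks c. *)

Section LexicographicRules.
Variable A : finType.
Implicit Types (F : {set {set A}}) (S X Y T : {set A}) (r R : rel A).

Definition candidates F S X := [set a in S | (a \notin X) && ((a |: X) \in F)].

Definition saturated F S X q := #|X| = q \/ candidates F S X = set0.

Definition downward_closed F :=
  forall S S', S \in F -> S' != set0 -> S' \subset S -> S' \in F.

Lemma lex_stepE F r S X :
  lex_step F r S X = if highest r (candidates F S X) is Some a then a |: X else X.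
Proof. by []. Qed.

Lemma lex_run_S F p S q :
  lex_run F p S q.+1 = lex_step F (p q.+1) S (lex_run F p S q).
Proof. by rewrite /lex_run -[q.+1]addn1 iotaD foldl_cat add1n addn1. Qed.

Lemma capacity_fillingP F C :
  capacity_filling F C <->
  forall S, S != set0 -> forall q, 1 <= q <= #|A| -> saturated F S (C S q) q.
Proof.
split=> [cap S S0 q qn | sat S S0 q qn a aS aC].
  have [|card_neq] := eqVneq #|C S q| q; [by left | right].
  apply/setP=> a; rewrite !inE; apply/negbTE/and3P=> -[aS aC aF].
  case: (cap S S0 q qn a aS aC)=> [/eqP|]; first by rewrite (negbTE card_neq).
  by rewrite setUC aF.
case: (sat S S0 q qn)=> [|/setP/(_ a)]; first by left.
by rewrite !inE aS aC setUC=> /negbT; right.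
Qed.

Section PriorityOrderings.
Variable r : rel A.
Hypothesis po : priority_ordering r.

Lemma priority_refl a : r a a.
Proof. by case: po=> tot _ _; have := tot a a; rewrite orbb. Qed.

Lemma highest_Some T a :
  highest r T = Some a -> a \in T /\ forall b, b \in T -> r a b.
Proof. by rewrite /highest; case: pickP=> // x /andP[xT /forall_inP top] [<-]. Qed.

Lemma highest_None T : highest r T = None -> T = set0.
Proof.
have [tot tr _] := po; have trans_r : transitive r by move=> y x z; apply: tr.
rewrite /highest; case: pickP=> // no_top _.
apply/eqP; apply: contraT=> /set0Pn[a aT].
case sortT: (sort r (enum T))=> [|x s].
  by have := mem_sort r (enum T) a; rewrite sortT mem_enum aT.
have mem_xs b : (b \in x :: s) = (b \in T) by rewrite -sortT mem_sort mem_enum.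
have /allP x_top : all (r x) s.
  by apply: order_path_min trans_r _; have := sort_sorted tot (enum T); rewrite sortT.
have := no_top x; rewrite -mem_xs mem_head /= => <-.
apply/forall_inP=> b; rewrite -mem_xs inE=> /orP[/eqP->|/x_top //].
exact: priority_refl.
Qed.

Lemma lex_step_highest F S X c :
  c \in candidates F S X -> (forall b, b \in candidates F S X -> r c b) ->
  lex_step F r S X = c |: X.
Proof.
move=> cT c_top; rewrite lex_stepE; case top: highest=> [x|]; last first.
  by move: cT; rewrite (highest_None top) inE.
have [xT x_top] := highest_Some top; have [_ _ anti] := po.
by rewrite (anti _ _ (x_top c cT) (c_top x xT)).
Qed.

Lemma lex_step_added F S X a b :
  a \in lex_step F r S X -> a \notin X -> b \in candidates F S X -> r a b.
Proof.
rewrite lex_stepE; case top: highest=> [c|] /=; last by move=> ->.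
by rewrite in_setU1=> /orP[/eqP-> _|->] //; apply: (highest_Some top).2.
Qed.

Lemma acyclic_sub_strict R :
  (forall a b, R a b -> r a b && (a != b)) -> acyclic R.
Proof.
have [_ tr anti] := po; move=> sub a b /sub/andP[rab neq_ab].
apply/negP=> /connectP[s pth ends].
have trans_r : transitive r by move=> y z w; apply: tr.
have /allP/(_ _ (mem_last b s)) : all (r b) (b :: s).
  rewrite /= priority_refl; apply: order_path_min trans_r _.
  by apply: sub_path pth=> x y /sub/andP[].
by rewrite -ends=> rba; rewrite (anti _ _ rab rba) eqxx in neq_ab.
Qed.

End PriorityOrderings.

Lemma lex_step_None F r S X : candidates F S X = set0 -> lex_step F r S X = X.
Proof. by rewrite lex_stepE=> ->; rewrite /highest; case: pickP=> // x; rewrite inE. Qed.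

Lemma lex_step_sub F r S X : X \subset lex_step F r S X.
Proof. by rewrite lex_stepE; case: highest=> [a|]; rewrite ?subsetUr. Qed.

Lemma lex_run_saturated F p S q :
  (forall k, 0 < k <= q -> priority_ordering (p k)) ->
  saturated F S (lex_run F p S q) q.
Proof.
elim: q=> [|q IH] po; first by left; rewrite cards0.
have po_q : priority_ordering (p q.+1) by apply: po; rewrite leqnn.
have {}IH : saturated F S (lex_run F p S q) q.
  by apply: IH=> k /andP[k0 kq]; apply: po; rewrite k0 ltnW.
rewrite lex_run_S lex_stepE; set X := lex_run F p S q.
case top: highest=> [a|]; last by right; apply: highest_None top.
have [aT _] := highest_Some top; case: IH=> [card_X|no_cand].
  by left; move: aT; rewrite inE cardsU1 card_X=> /and3P[_ -> _].
by move: aT; rewrite no_cand inE.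
Qed.

Section LinearExtension.
Variable R : rel A.

(* Along an edge of an acyclic R the set of R-reachable points shrinks strictly;
   enum_rank only breaks ties. *)
Definition extension_rank a := #|[set x | connect R a x]| * #|A| + enum_rank a.

Definition linear_extension : rel A :=
  fun a b => extension_rank b <= extension_rank a.

Lemma extension_rank_inj : injective extension_rank.
Proof.
move=> a b eq_ab; apply/enum_rank_inj/val_inj.
have : extension_rank a %% #|A| = extension_rank b %% #|A| by rewrite eq_ab.
by rewrite !modnMDl !modn_small.
Qed.

Lemma linear_extension_priority : priority_ordering linear_extension.
Proof.
split=> [a b | a b c | a b]; rewrite /linear_extension; first exact: leq_total.
  by move=> ba cb; apply: leq_trans cb ba.
by move=> ba ab; apply: extension_rank_inj; apply/eqP; rewrite eqn_leq ab ba.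
Qed.

Lemma linear_extension_rel a b : acyclic R -> R a b -> linear_extension a b.
Proof.
move=> acR Rab; rewrite /linear_extension /extension_rank.
set hb := #|[set x | connect R b x]|; set ha := #|[set x | connect R a x]|.
have lt_h : hb < ha.
  apply/proper_card/properP; split.
    by apply/subsetP=> x; rewrite !inE; apply: connect_trans (connect1 Rab).
  by exists a; rewrite !inE ?connect0 ?acR.
have : hb * #|A| + enum_rank b < hb.+1 * #|A| by rewrite mulSn addnC ltn_add2r.
have : hb.+1 * #|A| <= ha * #|A| by rewrite leq_mul2r lt_h orbT.
lia.
Qed.

End LinearExtension.

Definition revealed_priority F C k := linear_extension (Rq F C k).

Lemma lexicographic_axioms F C :
  lexicographic F C -> [/\ capacity_filling F C, monotone C & CSARP F C].
Proof.
move=> [p [po C_lex]].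
have po_le q : q <= #|A| -> forall k, 0 < k <= q -> priority_ordering (p k).
  by move=> qn k /andP[k0 kq]; apply: po; rewrite k0 (leq_trans kq qn).
have Cz_lex S : S != set0 -> forall q, q <= #|A| -> Cz C S q = lex_run F p S q.
  by move=> S0 [|q] qn //; apply: C_lex.
split.
- apply/capacity_fillingP=> S S0 q qn; rewrite C_lex //.
  by apply: lex_run_saturated; apply: po_le; case/andP: qn.
- move=> S S0 q /andP[q0 qn]; have qn' : q < #|A| by lia.
  have -> : C S q = Cz C S q by rewrite /Cz eqn0Ngt q0.
  rewrite -[C S q.+1]/(Cz C S q.+1) !Cz_lex ?(ltnW qn') //.
  by rewrite lex_run_S lex_step_sub.
move=> [//|q] /andP[_ qn].
apply: (acyclic_sub_strict (po q.+1 _))=> [|a b]; first by rewrite qn.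
case/existsP=> S /and5P[S0 aS bS aX /and4P[bX aY bY XbF]].
move: aX bX XbF aY bY; rewrite -[C S q.+1]/(Cz C S q.+1) /= !Cz_lex ?(ltnW qn) //.
rewrite lex_run_S=> aX bX XbF aY bY.
rewrite (lex_step_added aY aX) /=; last by rewrite inE bS bX setUC.
by apply: contraNneq bY=> <-.
Qed.

Lemma saturated_step F S X Y q :
  downward_closed F ->
  X \subset Y -> Y \subset S -> Y \in F -> #|Y| <= q.+1 ->
  saturated F S X q -> saturated F S Y q.+1 ->
  Y = X /\ candidates F S X = set0 \/ exists2 c, c \in candidates F S X & Y = c |: X.
Proof.
move=> down XY YS YF Yq satX satY.
have [YX0 | [c]] := set_0Vmem (Y :\: X).
  have Y_X : Y = X by apply/eqP; rewrite eqEsubset XY andbT -setD_eq0 YX0.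
  left; split=> //; case: satX=> [card_X|//].
  by case: satY; rewrite Y_X // card_X=> /n_Sn.
rewrite inE=> /andP[cX cY]; right.
have cand : c \in candidates F S X.
  rewrite inE (subsetP YS) // cX /=; apply: down YF _ _.
    by apply/set0Pn; exists c; apply: setU11.
  by rewrite subUset sub1set cY XY.
exists c => //; apply/eqP; rewrite eq_sym eqEcard subUset sub1set cY XY /=.
case: satX=> [card_X|no_cand]; last by rewrite no_cand inE in cand.
by rewrite cardsU1 cX card_X.
Qed.

Section ChoiceRuleStep.
Variables (F : {set {set A}}) (C : {set A} -> nat -> {set A}) (S : {set A}).
Hypothesis down : downward_closed F.
Hypothesis choiceC : choice_rule F C.
Hypothesis satC : forall S, S != set0 -> forall q, 1 <= q <= #|A| -> saturated F S (C S q) q.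
Hypothesis monoC : monotone C.
Hypothesis csarpC : CSARP F C.
Hypothesis S0 : S != set0.

Lemma Cz_saturated q : q <= #|A| -> saturated F S (Cz C S q) q.
Proof. by case: q=> [|q] qn; [left; rewrite cards0 | apply: satC]. Qed.

Lemma Cz_sub_next q : q < #|A| -> Cz C S q \subset C S q.+1.
Proof. by case: q=> [|q] qn; [rewrite sub0set | apply: monoC=> //; lia]. Qed.

Lemma Cz_next q : q < #|A| ->
  Cz C S q.+1 = lex_step F (revealed_priority F C q.+1) S (Cz C S q).
Proof.
move=> qn; have qn' : 1 <= q.+1 <= #|A| by rewrite qn.
have [_ YS YF Yq] := choiceC S0 qn'.
have -> : Cz C S q.+1 = C S q.+1 by [].
have [[-> no_cand] | [c cand Y_cX]] :=
  saturated_step down (Cz_sub_next qn) YS YF Yq (Cz_saturated (ltnW qn)) (satC S0 qn').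
  by rewrite lex_step_None.
rewrite Y_cX; apply/esym/lex_step_highest=> [|//|b]; first exact: linear_extension_priority.
have [-> _ | neq_bc bcand] := eqVneq b c; first exact/priority_refl/linear_extension_priority.
move: (cand) (bcand); rewrite !inE=> /and3P[cS cX _] /and3P[bS bX bF].
apply: linear_extension_rel; first exact: csarpC.
apply/existsP; exists S; rewrite -[q.+1.-1]/q S0 cS bS cX bX Y_cX.
by rewrite setUC in bF; rewrite !in_setU1 eqxx (negbTE neq_bc) (negbTE bX) bF.
Qed.

End ChoiceRuleStep.

Lemma axioms_lexicographic F C :
  downward_closed F ->
  choice_rule F C -> capacity_filling F C -> monotone C -> CSARP F C ->
  lexicographic F C.
Proof.
move=> down choiceC /capacity_fillingP satC monoC csarpC.
exists (revealed_priority F C); split=> [k _ | S S0].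
  exact: linear_extension_priority.
suff Cz_lex q : q <= #|A| -> Cz C S q = lex_run F (revealed_priority F C) S q.
  by move=> q /andP[q0 qn]; rewrite -Cz_lex // /Cz eqn0Ngt q0.
elim: q=> [//|q IH] qn; rewrite lex_run_S -IH ?(ltnW qn) //.
exact: (Cz_next down choiceC satC monoC csarpC S0 qn).
Qed.

End LexicographicRules.

Theorem proposition2 (A : finType) (F : {set {set A}})
    (C : {set A} -> nat -> {set A}) :
  0 < #|A| ->
  feasibility_collection F ->
  choice_rule F C ->
  (lexicographic F C <-> [/\ capacity_filling F C, monotone C & CSARP F C]).
Proof.
move=> _ [_ _ down _] choiceC; split; first exact: lexicographic_axioms.
by case=> cap mono csarp; apply: axioms_lexicographic.
Qed.
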